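(* Let $n\ge1$, and for $j=1,\dots,n$ let $\hat\phi_j\in\mathbb{R}$, $\tilde\phi_j\ge 0$ and $0\le\underline{\xi}_j\le\overline{\xi}_j$. For $\mathbf{x}\in\mathbb{R}^n$, $\mathbf{x}\succeq\mathbf{0}$, define $$\mathcal{P}_{\mathrm R}(\mathbf{x})=\max_{\substack{\phi_j\in[\hat\phi_j-\tilde\phi_j,\,\hat\phi_j+\tilde\phi_j]\\ \xi_j\in[\underline\xi_j,\,\overline\xi_j]}}\operatorname{tr}\Big\{\Big(\sum_{j=1}^n x_j\xi_j\mathbf{u}(\phi_j)\mathbf{u}(\phi_j)^{\mathsf T}\Big)^{-1}\Big\}$$ (the trace being $+\infty$ when the matrix is singular), $\underline{\mathbf{R}}=\operatorname{diag}\{\underline\xi_1,\dots,\underline\xi_n\}$ and $B(\mathbf{x})=\tfrac14\,\mathcal{P}_{\mathrm R}(\mathbf{x})\cdot\mathbf{1}^{\mathsf T}\underline{\mathbf{R}}\mathbf{x}$. For a positive integer $M$, let $\vartheta_m=(2m+1)\pi/M$ for $m\in\mathcal{M}=\{0,\dots,M-1\}$, let $[\mathbf{h}_m]_j=\max_{|\epsilon|\le2\tilde\phi_j}\cos(2\hat\phi_j-\vartheta_m+\epsilon)$ and $[\mathbf{g}_m]_j=[\mathbf{h}_m]_j/\cos(\pi/M)$, and $$\underline{\mathcal{P}}_M(\mathbf{x})=\max_{m\in\mathcal{M}}\frac{4\cdot\mathbf{1}^{\mathsf T}\underline{\mathbf{R}}\mathbf{x}}{(\mathbf{1}^{\mathsf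 T}\underline{\mathbf{R}}\mathbf{x})^2-(\mathbf{h}_m^{\mathsf T}\underline{\mathbf{R}}\mathbf{x})^2},\qquad \overline{\mathcal{P}}_M(\mathbf{x})=\max_{m\in\mathcal{M}}\frac{4\cdot\mathbf{1}^{\mathsf T}\underline{\mathbf{R}}\mathbf{x}}{(\mathbf{1}^{\mathsf T}\underline{\mathbf{R}}\mathbf{x})^2-(\mathbf{g}_m^{\mathsf T}\underline{\mathbf{R}}\mathbf{x})^2}.$$ Then for any $\mathbf{x}\succeq\mathbf{0}$ with $\mathcal{P}_{\mathrm R}(\mathbf{x})<\infty$ and any $M\ge\pi\sqrt{B(\mathbf{x})}$, $$\overline{\mathcal{P}}_M(\mathbf{x})\le(1+C_M)\,\underline{\mathcal{P}}_M(\mathbf{x}),\qquad C_M=\frac{\sin^2(\pi/M)\,(B(\mathbf{x})-1)}{1-\sin^2(\pi/M)\,B(\mathbf{x})}.$$ Moreover, $C_M$ is monotonically decreasing in $M$ and $\lim_{M\to\infty}C_M/M^{-2}=\pi^2(B(\mathbf{x})-1)$.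
   Context: $\mathbf{u}(\phi)=[\cos\phi\ \ \sin\phi]^{\mathsf T}$; $\mathbf{1}$ is the all-ones vector; $\mathbf{x}\succeq\mathbf{0}$ means entrywise nonnegative. This models one agent (with one uncertainty cell) in a wireless localization network with $n$ anchors: angles $\phi_j$ known to lie in $[\hat\phi_j-\tilde\phi_j,\hat\phi_j+\tilde\phi_j]$, equivalent ranging coefficients $\xi_j$ known to lie in $[\underline\xi_j,\overline\xi_j]$, and $\mathbf{x}$ the anchor transmit power vector. *)

From HB Require Import structures.
From mathcomp Require Import all_boot all_order all_algebra.
From mathcomp Require Import all_classical all_reals all_analysis.
Set Implicit Arguments. Unset Strict Implicit. Unset Printing Implicit Defensive.
Import Order.TTheory GRing.Theory Num.Theory.
Import numFieldNormedType.Exports.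
Local Open Scope classical_set_scope.
Local Open Scope ring_scope.

Section Defs.
Variable R : realType.
Variable n : nat.

Definition uvec (phi : R) : 'cV[R]_2 :=
  \col_(i < 2) (if i == ord0 then cos phi else sin phi).

Definition Jmat (x phi xi : 'I_n -> R) : 'M[R]_2 :=
  \sum_(j < n) (x j * xi j) *: (uvec (phi j) *m (uvec (phi j))^T).

Definition trinv (J : 'M[R]_2) : \bar R :=
  if J \in unitmx then ((\tr (invmx J))%:E)%E else (+oo)%E.

Definition P_R (phihat phitil xilo xiup x : 'I_n -> R) : \bar R :=
  ereal_sup [set r : \bar R | exists phi xi : 'I_n -> R,
     (forall j, phi j \in `[phihat j - phitil j, phihat j + phitil j])
     /\ (forall j, xi j \in `[xilo j, xiup j])
     /\ r = trinv (Jmat x phi xi)].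

Definition oneRx (xilo x : 'I_n -> R) : R := \sum_(j < n) xilo j * x j.

(* B(x) = 1/4 P_R(x) 1^T Rlow x  (meaningful when P_R(x) is finite) *)
Definition Bx (phihat phitil xilo xiup x : 'I_n -> R) : R :=
  4^-1 * fine (P_R phihat phitil xilo xiup x) * oneRx xilo x.

Definition theta (M m : nat) : R := (2 * m%:R + 1) * pi / M%:R.

Definition hvec (phihat phitil : 'I_n -> R) (M m : nat) (j : 'I_n) : R :=
  sup [set cos (2 * phihat j - theta M m + e) | e in `[- (2 * phitil j), 2 * phitil j]].

Definition gvec (phihat phitil : 'I_n -> R) (M m : nat) (j : 'I_n) : R :=
  hvec phihat phitil M m j / cos (pi / M%:R).

Definition quadratio (xilo x v : 'I_n -> R) : R :=
  4 * oneRx xilo x / (oneRx xilo x ^+ 2 - (\sum_(j < n) v j * xilo j * x j) ^+ 2).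

Definition maxM (M : nat) (f : nat -> R) : R :=
  \big[Num.max/f 0%N]_(m < M) f m.

Definition Plow (phihat phitil xilo x : 'I_n -> R) (M : nat) : R :=
  maxM M (fun m => quadratio xilo x (hvec phihat phitil M m)).

Definition Pup (phihat phitil xilo x : 'I_n -> R) (M : nat) : R :=
  maxM M (fun m => quadratio xilo x (gvec phihat phitil M m)).

Definition CM (B : R) (M : nat) : R :=
  (sin (pi / M%:R)) ^+ 2 * (B - 1) / (1 - (sin (pi / M%:R)) ^+ 2 * B).

End Defs.

(* Fix m and choose angles phi_j attaining the maxima that define h_m, with
   xi = xi_lo.  For the weights w_j = x_j xi_j, the matrix J has trace
   a = 1^T R x and determinant c s - m^2, where c, s, m are the weighted sums
   of cos^2, sin^2 and cos sin; moreover
   h_m^T R x = (c - s) cos theta_m + 2 m sin theta_m.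
   Hence a^2 - (h_m^T R x)^2 >= a^2 - (c - s)^2 - 4 m^2 = 4 det J > 0, so the
   m-th term of the lower bound is at most tr J^-1 <= P_R(x); equivalently
   a^2 <= q B(x) with q = a^2 - (h_m^T R x)^2.  Replacing h_m by g_m = h_m / c'
   (c' = cos(pi/M), s' = sin(pi/M)) turns the denominator into (q - s'^2 a^2) / c'^2,
   which is at least q (1 - s'^2 B(x)) / c'^2; the resulting factor
   c'^2 / (1 - s'^2 B(x)) is exactly 1 + C_M.  The hypothesis M >= pi sqrt B(x)
   gives s'^2 B(x) < 1 because sin t < t.  Monotonicity of C_M follows from
   sin(pi/M) decreasing, and its asymptotics from M sin(pi/M) -> pi. *)

From HB Require Import structures.
From mathcomp Require Import all_boot all_order all_algebra.
From mathcomp Require Import all_classical all_reals all_analysis.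
From mathcomp Require Import ring lra.
Import Order.TTheory GRing.Theory Num.Theory.
Import numFieldNormedType.Exports.
Local Open Scope classical_set_scope.
Local Open Scope ring_scope.

Lemma cauchy_schwarz_wsum {R : realDomainType} {n} (f g w : 'I_n -> R) :
  (forall k, 0 <= w k) ->
  (\sum_k w k * (f k * g k)) ^+ 2 <= (\sum_k w k * f k ^+ 2) * (\sum_k w k * g k ^+ 2).
Proof.
move=> w0; rewrite -subr_ge0 -(pmulrn_lge0 _ (ltn0Sn 1)).
have -> : ((\sum_k w k * f k ^+ 2) * (\sum_k w k * g k ^+ 2)
      - (\sum_k w k * (f k * g k)) ^+ 2) *+ 2 =
    \sum_i \sum_j w i * w j * (f i * g j - f j * g i) ^+ 2.
  have -> : \sum_i \sum_j w i * w j * (f i * g j - f j * g i) ^+ 2 =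
      \sum_i \sum_j (w i * f i ^+ 2) * (w j * g j ^+ 2)
    + \sum_i \sum_j (w j * f j ^+ 2) * (w i * g i ^+ 2)
    - (\sum_i \sum_j (w i * (f i * g i)) * (w j * (f j * g j))) *+ 2.
    rewrite -sumrMnl -big_split -sumrB /=; apply: eq_bigr => i _.
    rewrite -sumrMnl -big_split -sumrB /=; apply: eq_bigr => j _; ring.
  rewrite [X in _ + X - _]exchange_big /= -!big_distrlr /= expr2; ring.
by rewrite sumr_ge0 // => i _; rewrite sumr_ge0 // => j _; rewrite mulr_ge0 ?sqr_ge0 ?mulr_ge0.
Qed.

Lemma quadratic_ratio_div_le {R : realFieldType} {a H B c s : R} :
  0 <= a -> 0 < a ^+ 2 - H ^+ 2 -> a ^+ 2 <= (a ^+ 2 - H ^+ 2) * B ->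
  c ^+ 2 + s ^+ 2 = 1 -> s ^+ 2 * B < 1 ->
  4 * a / (a ^+ 2 - (H / c) ^+ 2) <=
    c ^+ 2 / (1 - s ^+ 2 * B) * (4 * a / (a ^+ 2 - H ^+ 2)).
Proof.
move=> a0 q_gt0 aB cs sB; set q := a ^+ 2 - H ^+ 2 in q_gt0 aB *.
have d_gt0 : 0 < 1 - s ^+ 2 * B by rewrite subr_gt0.
have B1 : 1 <= B.
  have q_le : q <= a ^+ 2 by rewrite /q lerBlDr lerDl sqr_ge0.
  by rewrite -(ler_pM2l q_gt0) mulr1 (le_trans q_le aB).
have s2_lt1 : s ^+ 2 < 1 by apply: le_lt_trans sB; rewrite ler_peMr ?sqr_ge0.
have c2_gt0 : 0 < c ^+ 2 by rewrite -(addrK (s ^+ 2) (c ^+ 2)) cs subr_gt0.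
have c0 : c != 0 by apply: contraTneq c2_gt0 => ->; rewrite expr0n ltxx.
have den_le : q * (1 - s ^+ 2 * B) <= a ^+ 2 * c ^+ 2 - H ^+ 2.
  have -> : a ^+ 2 * c ^+ 2 - H ^+ 2 = q * (1 - s ^+ 2 * B) + s ^+ 2 * (q * B - a ^+ 2).
    by rewrite -[c ^+ 2](addrK (s ^+ 2)) cs /q; ring.
  by rewrite lerDl mulr_ge0 ?sqr_ge0 ?subr_ge0.
have den_gt0 : 0 < a ^+ 2 * c ^+ 2 - H ^+ 2 by apply: lt_le_trans den_le; rewrite mulr_gt0.
have -> : 4 * a / (a ^+ 2 - (H / c) ^+ 2) = 4 * a * c ^+ 2 / (a ^+ 2 * c ^+ 2 - H ^+ 2).
  by field; rewrite exprMn (gt_eqF den_gt0) c0.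
have -> : c ^+ 2 / (1 - s ^+ 2 * B) * (4 * a / q) = 4 * a * c ^+ 2 / (q * (1 - s ^+ 2 * B)).
  by field; rewrite !gt_eqF.
have num_ge0 : 0 <= 4 * a * c ^+ 2 := mulr_ge0 (mulr_ge0 (ler0n _ 4) a0) (ltW c2_gt0).
by rewrite ler_wpM2l // lef_pV2 ?posrE ?mulr_gt0.
Qed.

Section Mx22.
Variable R : comUnitRingType.
Implicit Type A : 'M[R]_2.

(* The indices produced by [big_ord_recl] and [lift] are not convertible to
   the ring constants [0] and [1] of ['I_2]. *)
Let ord0E : ord0 = 0 :> 'I_2. Proof. exact: val_inj. Qed.
Let lift0E : lift ord0 ord0 = 1 :> 'I_2. Proof. exact: val_inj. Qed.
Let lift00 : lift 0 0 = 1 :> 'I_2. Proof. exact: val_inj. Qed.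
Let lift10 : lift 1 0 = 0 :> 'I_2. Proof. exact: val_inj. Qed.

Lemma mxtrace_mx22 A : \tr A = A 0 0 + A 1 1.
Proof. by rewrite /mxtrace !big_ord_recl big_ord0 addr0 ord0E lift0E. Qed.

Lemma det_mx22 A : \det A = A 0 0 * A 1 1 - A 0 1 * A 1 0.
Proof.
rewrite (expand_det_row _ 0) !big_ord_recl big_ord0 addr0 /cofactor !det_mx11 !mxE /=.
by rewrite ord0E lift0E lift10 /= expr0 expr1 !mul1r mulN1r mulrN.
Qed.

Lemma mxtrace_adj_mx22 A : \tr (\adj A) = \tr A.
Proof.
rewrite !mxtrace_mx22 !mxE /cofactor !det_mx11 !mxE /= lift00 lift10.
by rewrite (_ : 1 %% 2 + 1 %% 2 = 2)%N // sqrrN expr1n expr0 !mul1r addrC.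
Qed.

Lemma mxtrace_invmx22 A : A \in unitmx -> \tr (invmx A) = (\det A)^-1 * \tr A.
Proof. by move=> uA; rewrite /invmx uA mxtraceZ mxtrace_adj_mx22. Qed.

End Mx22.

Section PiOverN.
Context {R : realType}.
Implicit Types (B x : R) (M : nat).

Lemma cvg_pi_divn : (pi / M%:R : R) @[M --> \oo] --> 0.
Proof.
have invn0 : (M%:R^-1 : R) @[M --> \oo] --> 0.
  apply/gtr0_cvgV0; last exact: cvgr_idn.
  by near=> M; rewrite ltr0n; near: M; exact: nbhs_infty_gt.
by have := cvgM (cvg_cst (pi : R)) invn0; rewrite mulr0; exact.
Unshelve. all: end_near. Qed.

Lemma sin_bounds x : 0 < x <= pi -> x * cos x <= sin x < x.
Proof.
move=> /andP[x0 xpi].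
have [c /itvP cI] := @MVT R sin cos 0 x x0 (fun y _ => is_derive_sin y)
   (continuous_subspaceT (@continuous_sin R)).
rewrite sin0 !subr0 => ->.
have c0 : 0 < c by rewrite cI.
have cx : c < x by rewrite cI.
have xI : x \in `[0, pi] by rewrite in_itv /= (ltW x0) xpi.
have cI' : c \in `[0, pi] by rewrite in_itv /= (ltW c0) (le_trans (ltW cx)).
have zI : (0 : R) \in `[0, pi] by rewrite in_itv /= lexx pi_ge0.
rewrite mulrC ler_pM2r // gtr_pMl // -[X in _ < X]cos0.
by rewrite leNgt !ltr_cos // -leNgt (ltW cx).
Qed.

Lemma pi_divn_itv {M} : (2 <= M)%N -> 0 < (pi : R) / M%:R <= pi / 2.
Proof.
move=> M2; rewrite divr_gt0 ?pi_gt0 ?ltr0n ?(leq_trans _ M2) //=.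
by rewrite ler_pM2l ?pi_gt0 // lef_pV2 ?posrE ?ltr0n ?ler_nat // (leq_trans _ M2).
Qed.

Lemma leq2_of_pi_sqrt_le {B M} : 1 <= B -> pi * Num.sqrt B <= M%:R -> (2 <= M)%N.
Proof.
move=> B1 hM; rewrite -(ler_nat R); apply: le_trans hM; rewrite -[2]mulr1.
by apply: ler_pM => //; [exact: pi_ge2 | rewrite -(sqrtr1 R) ler_wsqrtr].
Qed.

Lemma sin_pi_divn_bounds {M} : (2 <= M)%N -> let x : R := pi / M%:R in
  0 < sin x /\ x * cos x <= sin x < x.
Proof.
move=> /pi_divn_itv /andP[x0 x_pihalf] x.
have xpi : x < pi by rewrite (le_lt_trans x_pihalf) // ltr_pdivrMr // ltr_pMr ?pi_gt0 ?ltr1n.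
by split; [rewrite sin_gt0_pi // x0 | apply: sin_bounds; rewrite x0 ltW].
Qed.

Lemma sin_pi_divn_sqr_lt {B M} : 1 <= B -> pi * Num.sqrt B <= M%:R ->
  sin (pi / M%:R) ^+ 2 * B < 1.
Proof.
move=> B1 hM; have M2 := leq2_of_pi_sqrt_le B1 hM.
have [s0 /andP[_ sx]] := sin_pi_divn_bounds M2.
have B0 : 0 < B := lt_le_trans ltr01 B1.
apply: (lt_le_trans (_ : _ < (pi / M%:R) ^+ 2 * B)).
  by rewrite ltr_pM2r // ltr_pXn2r ?nnegrE ?(ltW s0) ?(le_trans (ltW s0) (ltW sx)).
rewrite expr_div_n mulrAC ler_pdivrMr ?exprn_gt0 ?ltr0n ?(leq_trans _ M2) // mul1r.
by rewrite -[B]sqr_sqrtr ?(ltW B0) // -exprMn ler_pXn2r ?nnegrE ?(le_trans _ hM) ?mulr_ge0 ?pi_ge0 ?sqrtr_ge0.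
Qed.

Lemma sin_pi_divn_sqr_le {M1 M2} : (2 <= M1)%N -> (M1 <= M2)%N ->
  sin (pi / M2%:R) ^+ 2 <= sin (pi / M1%:R) ^+ 2 :> R.
Proof.
move=> M1_2 M12; have M2_2 := leq_trans M1_2 M12.
have [s0 _] := sin_pi_divn_bounds M2_2.
have inI M : (2 <= M)%N -> (pi / M%:R : R) \in `[- (pi / 2), pi / 2].
  move=> /pi_divn_itv /andP[x0 x_pihalf].
  by rewrite in_itv /= x_pihalf (le_trans _ (ltW x0)) // oppr_le0 divr_ge0 ?pi_ge0.
have s21 : sin (pi / M2%:R) <= sin (pi / M1%:R) :> R.
  rewrite leNgt ltr_sin ?inI // -leNgt ler_pM2l ?pi_gt0 //.
  by rewrite lef_pV2 ?posrE ?ltr0n ?ler_nat ?(ltnW M1_2) ?(ltnW M2_2).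
by rewrite ler_pXn2r ?nnegrE ?(ltW s0) ?(le_trans (ltW s0) s21).
Qed.

Lemma CM_le B M1 M2 : 1 <= B -> pi * Num.sqrt B <= M1%:R -> (M1 <= M2)%N ->
  CM B M2 <= CM B M1.
Proof.
move=> B1 hM M12; have M1_2 := leq2_of_pi_sqrt_le B1 hM.
have t21 := sin_pi_divn_sqr_le M1_2 M12.
have t1B := sin_pi_divn_sqr_lt B1 hM.
rewrite /CM; set t1 := sin (pi / M1%:R) ^+ 2 in t21 t1B *.
set t2 := sin (pi / M2%:R) ^+ 2 in t21 *.
have d1 : 0 < 1 - t1 * B by rewrite subr_gt0.
have d2 : 0 < 1 - t2 * B.
  by rewrite subr_gt0 (le_lt_trans _ t1B) // ler_wpM2r // (le_trans ler01).
rewrite -subr_ge0.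
have -> : t1 * (B - 1) / (1 - t1 * B) - t2 * (B - 1) / (1 - t2 * B) =
    (B - 1) * (t1 - t2) / ((1 - t1 * B) * (1 - t2 * B)).
  by field; rewrite !gt_eqF.
by rewrite divr_ge0 ?mulr_ge0 ?(ltW d1) ?(ltW d2) ?subr_ge0.
Qed.

Lemma cvg_natr_mul_sin_pi_divn : (M%:R * sin (pi / M%:R) : R) @[M --> \oo] --> pi.
Proof.
apply: (@squeeze_cvgr _ _ _ _ (fun M : nat => pi * cos (pi / M%:R)) (fun=> pi)).
- near=> M.
  have M2 : (2 <= M)%N by near: M; exact: nbhs_infty_ge.
  have [_ /andP[lo hi]] := sin_pi_divn_bounds M2.
  have M0 : (0 : R) < M%:R by rewrite ltr0n (leq_trans _ M2).
  have E : M%:R * (pi / M%:R) = pi :> R by rewrite mulrCA mulfV ?gt_eqF ?mulr1.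
  rewrite -[X in X * cos _]E -mulrA ler_pM2l // lo /=.
  by rewrite -[X in _ <= X]E ler_pM2l // ltW.
- have := cvgM (cvg_cst (pi : R)) (continuous_cvg _ (@continuous_cos R 0) cvg_pi_divn).
  by rewrite cos0 mulr1; exact.
- exact: cvg_cst.
Unshelve. all: end_near. Qed.

Lemma cvg_CM B : (CM B M / M%:R ^-2) @[M --> \oo] --> pi ^+ 2 * (B - 1).
Proof.
have sin_to0 : (sin (pi / M%:R) : R) @[M --> \oo] --> 0.
  by have := continuous_cvg _ (@continuous_sin R 0) cvg_pi_divn; rewrite sin0; exact.
pose Ms M : R := M%:R * sin (pi / M%:R).
have -> : (fun M => CM B M / M%:R ^-2) = fun M =>
    Ms M * Ms M * (B - 1) / (1 - sin (pi / M%:R) * sin (pi / M%:R) * B).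
  by apply/funext => M; rewrite /CM /Ms invrK; ring.
have -> : pi ^+ 2 * (B - 1) = pi * pi * (B - 1) / (1 - 0 * 0 * B).
  by rewrite mul0r mul0r subr0 divr1 expr2.
apply: cvgM; first by apply: cvgM; [apply: cvgM; exact: cvg_natr_mul_sin_pi_divn | exact: cvg_cst].
apply: cvgV; first by rewrite mul0r mul0r subr0 oner_neq0.
by apply: cvgB; [exact: cvg_cst | apply: cvgM; [apply: cvgM |exact: cvg_cst]].
Qed.

End PiOverN.

Definition wsum {R : realType} {n} (xi x v : 'I_n -> R) : R := \sum_j v j * xi j * x j.

Section FisherMatrix.
Context {R : realType} {n : nat}.
Implicit Types (x phi xi : 'I_n -> R).

Lemma uvec0 (a : R) : uvec a 0 0 = cos a. Proof. by rewrite mxE. Qed.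
Lemma uvec1 (a : R) : uvec a 1 0 = sin a. Proof. by rewrite mxE. Qed.

Lemma Jmat_entry x phi xi i j :
  Jmat x phi xi i j = \sum_k x k * xi k * (uvec (phi k) i 0 * uvec (phi k) j 0).
Proof. by rewrite summxE; apply: eq_bigr => k _; rewrite !mxE big_ord1 !mxE. Qed.

Lemma mxtrace_Jmat x phi xi : \tr (Jmat x phi xi) = oneRx xi x.
Proof.
rewrite mxtrace_mx22 !Jmat_entry -big_split; apply: eq_bigr => k _ /=.
by rewrite uvec0 uvec1 -mulrDr -!expr2 cos2Dsin2 mulr1 mulrC.
Qed.

Lemma det_Jmat x phi xi : \det (Jmat x phi xi) =
  (\sum_k x k * xi k * cos (phi k) ^+ 2) * (\sum_k x k * xi k * sin (phi k) ^+ 2)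
  - (\sum_k x k * xi k * (cos (phi k) * sin (phi k))) ^+ 2.
Proof.
rewrite det_mx22 !Jmat_entry [in RHS]expr2.
by congr (_ * _ - _ * _); apply: eq_bigr => k _; rewrite ?uvec0 ?uvec1 ?expr2 // [sin _ * _]mulrC.
Qed.

Lemma oneRx_ge0 {xi x} : (forall j, 0 <= xi j) -> (forall j, 0 <= x j) -> 0 <= oneRx xi x.
Proof. by move=> xi0 x0; rewrite sumr_ge0 // => j _; rewrite mulr_ge0. Qed.

Lemma quadratioE xi x v :
  quadratio xi x v = 4 * oneRx xi x / (oneRx xi x ^+ 2 - wsum xi x v ^+ 2).
Proof. by []. Qed.

Lemma quadratio_cos_le_trinv {x phi xi} (t : R) :
  (forall j, 0 <= x j) -> (forall j, 0 <= xi j) -> Jmat x phi xi \in unitmx ->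
  let v j := cos (2 * phi j - t) in
  0 < oneRx xi x ^+ 2 - wsum xi x v ^+ 2 /\
  quadratio xi x v <= \tr (invmx (Jmat x phi xi)).
Proof.
move=> x0 xi0 uJ v; rewrite quadratioE mxtrace_invmx22 // det_Jmat mxtrace_Jmat.
have w0 k : 0 <= x k * xi k by rewrite mulr_ge0.
set a := oneRx xi x; set H := wsum xi x v.
set c := \sum_k _ * cos _ ^+ 2; set s := \sum_k _ * sin _ ^+ 2.
set m := \sum_k _ * (cos _ * sin _).
have aE : a = c + s.
  rewrite /a /oneRx -big_split; apply: eq_bigr => k _ /=.
  by rewrite -mulrDr cos2Dsin2 mulr1 mulrC.
have HE : H = c * cos t - s * cos t + 2 * (m * sin t).
  rewrite /H /wsum !mulr_suml mulr_sumr -sumrB -big_split /=.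
  by apply: eq_bigr => k _; rewrite /v [2 * phi k]mulr_natl mulr2n cosB cosD sinD; ring.
have det_ge0 : m ^+ 2 <= c * s := cauchy_schwarz_wsum _ _ _ w0.
have det_neq0 : c * s - m ^+ 2 != 0.
  by rewrite -det_Jmat -unitfE -unitmxE.
have det_gt0 : 0 < c * s - m ^+ 2 by rewrite lt_def det_neq0 subr_ge0.
have H_le : H ^+ 2 <= (c - s) ^+ 2 + (2 * m) ^+ 2.
  have E : (c - s) ^+ 2 + (2 * m) ^+ 2 - H ^+ 2 = ((c - s) * sin t - 2 * m * cos t) ^+ 2
      + ((c - s) ^+ 2 + (2 * m) ^+ 2) * (1 - (cos t ^+ 2 + sin t ^+ 2)).
    by rewrite HE; ring.
  by rewrite -subr_ge0 E cos2Dsin2 subrr mulr0 addr0 sqr_ge0.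
have q_ge : 4 * (c * s - m ^+ 2) <= a ^+ 2 - H ^+ 2.
  rewrite aE; move: H_le; set h := H ^+ 2; lra.
have q_gt0 : 0 < a ^+ 2 - H ^+ 2 by apply: lt_le_trans q_ge; rewrite mulr_gt0.
split => //.
have a0 : 0 <= a := oneRx_ge0 xi0 x0.
have -> : (c * s - m ^+ 2)^-1 * a = 4 * a / (4 * (c * s - m ^+ 2)) by field.
by rewrite ler_wpM2l ?mulr_ge0 // lef_pV2 ?posrE ?mulr_gt0.
Qed.

End FisherMatrix.

Section UncertaintyBox.
Context {R : realType} {n : nat} {phihat phitil xilo xiup x : 'I_n -> R}.
Hypothesis phitil_ge0 : forall j, 0 <= phitil j.
Hypothesis xilo_ge0 : forall j, 0 <= xilo j.
Hypothesis xilo_le_xiup : forall j, xilo j <= xiup j.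
Hypothesis x_ge0 : forall j, 0 <= x j.
Hypothesis P_R_finite : (P_R phihat phitil xilo xiup x < +oo)%E.

Lemma hvec_attained M m j : exists2 ph,
  ph \in `[phihat j - phitil j, phihat j + phitil j] &
  hvec phihat phitil M m j = cos (2 * ph - theta R M m).
Proof.
pose f e := cos (2 * phihat j - theta R M m + e).
have le_ends : - (2 * phitil j) <= 2 * phitil j.
  by have := phitil_ge0 j; lra.
have f_cont : {within `[- (2 * phitil j), 2 * phitil j], continuous f}.
  apply: continuous_subspaceT => e; apply: continuous_comp; last exact: continuous_cos.
  by apply: continuousD; [exact: cvg_cst | exact: cvg_id].
have [e eI f_max] := EVT_max le_ends f_cont.
exists (phihat j + e / 2).
  by move: eI; rewrite !in_itv /= => /andP[? ?]; apply/andP; split; lra.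
have -> : 2 * (phihat j + e / 2) - theta R M m = 2 * phihat j - theta R M m + e by field.
apply/le_anti/andP; split.
  by apply: ge_sup; [exists (f e), e | move=> _ [e' e'I <-]; exact: f_max].
by apply: ub_le_sup; [exists (f e) => _ [e' e'I <-]; exact: f_max | exists e].
Qed.

Lemma trinv_le_P_R {phi xi} :
  (forall j, phi j \in `[phihat j - phitil j, phihat j + phitil j]) ->
  (forall j, xi j \in `[xilo j, xiup j]) ->
  (trinv (Jmat x phi xi) <= P_R phihat phitil xilo xiup x)%E.
Proof. by move=> phiI xiI; apply: ereal_sup_ubound; exists phi, xi. Qed.

Lemma quadratio_hvec_le_P_R M m : let v := hvec phihat phitil M m in
  0 < oneRx xilo x ^+ 2 - wsum xilo x v ^+ 2 /\
  quadratio xilo x v <= fine (P_R phihat phitil xilo xiup x).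
Proof.
have /choice[phi phiP] : forall j, exists ph,
    ph \in `[phihat j - phitil j, phihat j + phitil j] /\
    hvec phihat phitil M m j = cos (2 * ph - theta R M m).
  by move=> j; have [ph ? ?] := hvec_attained M m j; exists ph.
have vE : hvec phihat phitil M m = fun j => cos (2 * phi j - theta R M m).
  by apply/funext => j; have [_ ->] := phiP j.
have xiI j : xilo j \in `[xilo j, xiup j] by rewrite in_itv /= lexx xilo_le_xiup.
have le_P := trinv_le_P_R (fun j => (phiP j).1) xiI.
have uJ : Jmat x phi xilo \in unitmx.
  apply: contraT => nuJ; move: le_P; rewrite /trinv (negbTE nuJ) leye_eq => /eqP P_oo.
  by move: P_R_finite; rewrite P_oo ltxx.
have [q_gt0 le_tr] := quadratio_cos_le_trinv (theta R M m) x_ge0 xilo_ge0 uJ.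
rewrite vE; split => //; apply: le_trans le_tr _.
move: le_P; rewrite /trinv uJ => le_P.
have P_fin : P_R phihat phitil xilo xiup x \is a fin_num.
  rewrite fin_numE; apply/andP; split; apply/eqP => P_inf.
    by move: le_P; rewrite P_inf leeNy_eq.
  by move: P_R_finite; rewrite P_inf ltxx.
by rewrite -lee_fin fineK.
Qed.

Lemma Bx_bound M m :
  let q := oneRx xilo x ^+ 2 - wsum xilo x (hvec phihat phitil M m) ^+ 2 in
  0 < q /\ oneRx xilo x ^+ 2 <= q * Bx phihat phitil xilo xiup x.
Proof.
have [q_gt0 le_P] := quadratio_hvec_le_P_R M m; split => //.
rewrite quadratioE ler_pdivrMr // in le_P.
have a0 := oneRx_ge0 xilo_ge0 x_ge0.
rewrite /Bx; move: q_gt0 le_P a0.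
set a := oneRx _ _; set q := _ - _; set p := fine _; nra.
Qed.

Lemma Bx_ge1 : 1 <= Bx phihat phitil xilo xiup x.
Proof.
have [] := Bx_bound 0 0; set a := oneRx _ _; set H := wsum _ _ _; set B := Bx _ _ _ _ _.
nra.
Qed.

End UncertaintyBox.

Lemma le_maxM {R : realType} (f : nat -> R) M m : (m < M)%N -> f m <= maxM M f.
Proof. by move=> mM; exact: (le_bigmax (f 0%N) (fun i : 'I_M => f i) (Ordinal mM)). Qed.

Lemma maxM_le {R : realType} (f : nat -> R) M K : (0 < M)%N ->
  (forall m, (m < M)%N -> f m <= K) -> maxM M f <= K.
Proof. by move=> M0 fK; apply: bigmax_le => [|i _]; apply: fK. Qed.

Lemma wsum_gvec {R : realType} n (phihat phitil xi x : 'I_n -> R) M m :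
  wsum xi x (gvec phihat phitil M m) =
  wsum xi x (hvec phihat phitil M m) / cos (pi / M%:R).
Proof. by rewrite /wsum mulr_suml; apply: eq_bigr => j _; rewrite /gvec; ring. Qed.

Theorem proposition6 (R : realType) (n : nat) (phihat phitil xilo xiup : 'I_n -> R) :
  (0 < n)%N ->
  (forall j, 0 <= phitil j) ->
  (forall j, 0 <= xilo j) ->
  (forall j, xilo j <= xiup j) ->
  forall x : 'I_n -> R, (forall j, 0 <= x j) ->
  (P_R phihat phitil xilo xiup x < +oo)%E ->
  let B := Bx phihat phitil xilo xiup x in
  (forall M : nat, (0 < M)%N -> pi * Num.sqrt B <= M%:R ->
     Pup phihat phitil xilo x M <= (1 + CM B M) * Plow phihat phitil xilo x M)
  /\ (forall M1 M2 : nat, (0 < M1)%N -> pi * Num.sqrt B <= M1%:R -> (M1 <= M2)%N ->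
        CM B M2 <= CM B M1)
  /\ ((fun M : nat => CM B M / (M%:R ^-2)) @ \oo --> pi ^+ 2 * (B - 1)).
Proof.
move=> _ phitil_ge0 xilo_ge0 xilo_le_xiup x x_ge0 P_fin B.
have B1 : 1 <= B := Bx_ge1 phitil_ge0 xilo_ge0 xilo_le_xiup x_ge0 P_fin.
split; [|split]; last exact: cvg_CM.
- move=> M M0 hM; have sB := sin_pi_divn_sqr_lt B1 hM.
  have CME : 1 + CM B M = cos (pi / M%:R) ^+ 2 / (1 - sin (pi / M%:R) ^+ 2 * B).
    by rewrite /CM cos2sin2; field; rewrite gt_eqF // subr_gt0.
  have a0 := oneRx_ge0 xilo_ge0 x_ge0.
  apply: maxM_le => // m mM.
  have [q_gt0 aB] := Bx_bound phitil_ge0 xilo_ge0 xilo_le_xiup x_ge0 P_fin M m.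
  rewrite quadratioE wsum_gvec CME.
  apply: le_trans (quadratic_ratio_div_le a0 q_gt0 aB (cos2Dsin2 _) sB) _.
  rewrite ler_wpM2l ?divr_ge0 ?sqr_ge0 ?subr_ge0 ?(ltW sB) //.
  exact: (le_maxM (fun m => quadratio xilo x (hvec phihat phitil M m))).
- by move=> M1 M2 _ hM M12; exact: CM_le.
Qed.
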